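(* Let $0\le c<\sqrt2-1$, let $K\ge1$ be an integer, let $t$ be a positive integer such that $R=(1+c)t$ is an integer with $R\ge10$, and let $L=R^{2K+1}$. For $l\in[K]$ with $cR^{K-l}$ an integer, define \[g_l=\big(1_{R^{K+1+l},R^{K-l}}\,2_{R^{K+1+l},R^{K-l}}\big)^{L/R^{K+1+l}}.\] Let $1\le i<j\le K$ with $cR^{K-i}$ and $cR^{K-j}$ integers, and let $s$ be a common subsequence of $g_i$ and $g_j$. Then \[\left(1+\frac2R\right)\operatorname{span}_{g_i}s+\operatorname{span}_{g_j}s\ \ge\ (3+c)\operatorname{len} s-\frac{10L}{R}.\]
   Context: Words are over $\{1,2\}$; $\alpha^m$ is letter $\alpha$ repeated $m$ times and $u^m$ is $m$ concatenated copies of word $u$. For positive integers $M,a$ with $ca$ and $M/((1+c)a)$ integers, $1_{M,a}=(1^a2^{ca})^{M/((1+c)a)}$ and $2_{M,a}=(2^a1^{ca})^{M/((1+c)a)}$. (The paper adopts the convention that all such lengths are integers.) Symbols are distinguishable positions; a common subsequence of $u_1,u_2$ is a pair of subsequences of $u_1,u_2$ equal as words, $\operatorname{len} s$ its length; $\operatorname{span}_{u}s$ is the length of the shortest block of consecutive symbols of $u$ containing the part of $s$ lying in $u$. *)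

From mathcomp Require Import all_boot all_order all_algebra.
From mathcomp Require Import reals.
Set Implicit Arguments. Unset Strict Implicit. Unset Printing Implicit Defensive.

(* Words over {1,2} are represented as seq nat (letters 1 and 2). *)

Definition blk (x y a b : nat) : seq nat := nseq a x ++ nseq b y.

(* 1_{M,a} = (1^a 2^{ca})^{M/((1+c)a)}, with b = ca (an integer), so (1+c)a = a+b. *)
Definition word1 (M a b : nat) : seq nat := flatten (nseq (M %/ (a + b)) (blk 1 2 a b)).
Definition word2 (M a b : nat) : seq nat := flatten (nseq (M %/ (a + b)) (blk 2 1 a b)).

(* g_l = (1_{R^{K+1+l},R^{K-l}} 2_{R^{K+1+l},R^{K-l}})^{L/R^{K+1+l}},
   where b = c R^{K-l} (assumed integer) and L = R^{2K+1}. *)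
Definition gword (r K l b : nat) : seq nat :=
  let M := r ^ (K + 1 + l) in
  let a := r ^ (K - l) in
  flatten (nseq (r ^ (2 * K + 1) %/ M) (word1 M a b ++ word2 M a b)).

Definition common_subseq (u1 u2 : seq nat) (I J : seq nat) : Prop :=
  [/\ sorted ltn I, sorted ltn J, size I = size J &
      [/\ all (fun k => k < size u1) I, all (fun k => k < size u2) J &
           map (nth 0 u1) I = map (nth 0 u2) J]].

Definition wspan (I : seq nat) : nat :=
  if I is x :: I' then (last x I' - x).+1 else 0.

From mathcomp Require Import all_boot all_order all_algebra.
From mathcomp Require Import reals.
From mathcomp Require Import zify ring lra.
Set Implicit Arguments. Unset Strict Implicit. Unset Printing Implicit Defensive.
Import Order.TTheory GRing.Theory Num.Theory.

(* Write u = g_i and v = g_j: both alternate regions 1_{M,a}, 2_{M,a} (resp. 1_{M',a'},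
   2_{M',a'}) made of runs of a and b = ca equal letters, and a' <= a / R, M a' <= L / R.
   To a matched pair of positions (p, q) we attach the potential
     upot p q = twice the number of letters of u[0..p] equal to the majority letter of the
                region of v containing q,
     gpot p   = (1 + c) a' times the index of the run of u containing p,
     vpot q   = start of the region of q plus a count of v[q] in that region, weighted 1 + c
                for majority and (1 + c) / c for minority letters; it stays within a' of q + 1,
     zpot q   = (2M + c a') times the index of the region of q.
   Each further matched pair raises the potential by at least 3 + c: a majority letter gains
   2 in upot and 1 + c in vpot, a minority letter gains (1 + c) / c >= 3 + c in vpot, which is
   c^2 + 2c <= 1, i.e. c <= sqrt 2 - 1. A change of letter in u may cost (1 + c) a' in vpot but
   gains as much in gpot; a change of region in v costs at most 2M in upot and c a' in vpot,
   paid by zpot. Over the whole subsequence the potential grows by at most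
   (1 + 2/R) span_u + span_v + O(L / R); the 2/R comes from gpot, as a span of u meets
   about 2 span_u / (a + b) runs and (1 + c) a' <= (a + b) / R. *)

Section SeqCount.
Variable T : Type.
Implicit Types (w s : seq T) (P : pred T).

Lemma size_flatten_nseq w N : size (flatten (nseq N w)) = N * size w.
Proof. by elim: N => //= N IH; rewrite size_cat IH mulSn. Qed.

Lemma count_flatten_nseq P w N : count P (flatten (nseq N w)) = N * count P w.
Proof. by elim: N => //= N IH; rewrite count_cat IH mulSn. Qed.

Lemma all_flatten_nseq P w N : all P w -> all P (flatten (nseq N w)).
Proof. by move=> Pw; elim: N => //= N IH; rewrite all_cat Pw IH. Qed.

Lemma nth_flatten_nseq x0 w N p : p < N * size w ->
  nth x0 (flatten (nseq N w)) p = nth x0 w (p %% size w).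
Proof.
elim: N p => [|N IH] p; first by rewrite mul0n.
rewrite mulSn /= nth_cat => lt_p; case: ltnP => le_wp; first by rewrite modn_small.
rewrite IH; last by lia.
by rewrite -[in RHS](subnK le_wp) modnDr.
Qed.

Lemma take_flatten_nseq w N z : 0 < size w -> z <= N * size w ->
  take z (flatten (nseq N w)) = flatten (nseq (z %/ size w) w) ++ take (z %% size w) w.
Proof.
move=> w_gt0; elim: N z => [|N IH] z le_z.
  by move: le_z; rewrite mul0n leqn0 => /eqP ->; rewrite div0n mod0n !take0.
rewrite /= take_cat; case: ltnP => le_wz; first by rewrite divn_small // modn_small.
rewrite -{2 3}(subnK le_wz) modnDr divnDr ?dvdnn // divnn w_gt0 addn1 /= -catA IH //.
by move: le_z; rewrite mulSn; lia.
Qed.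

Lemma drop_flatten_nseq w N k :
  drop (k * size w) (flatten (nseq N w)) = flatten (nseq (N - k) w).
Proof.
elim: k N => [|k IH] [|N] //=; first by rewrite drop0.
by rewrite drop_cat mulSn ltnNge leq_addr /= addKn IH.
Qed.

Lemma count_take_nth x0 P s k : k < size s ->
  count P (take k.+1 s) = count P (take k s) + P (nth x0 s k).
Proof. by move=> lt_ks; rewrite (take_nth x0 lt_ks) -cats1 count_cat /= addn0. Qed.

Lemma count_take_mono P s m k : m <= k -> count P (take m s) <= count P (take k s).
Proof. by move=> le_mk; rewrite -(subnKC le_mk) takeD count_cat leq_addr. Qed.

Lemma count_take_le P s k : count P (take k s) <= count P s.
Proof. by rewrite -{2}(cat_take_drop k s) count_cat leq_addr. Qed.

Lemma count_slice_nth x0 P s k q : k <= q < size s ->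
  count P (take (q.+1 - k) (drop k s)) = count P (take (q - k) (drop k s)) + P (nth x0 s q).
Proof.
case/andP=> le_kq lt_q; rewrite subSn // (count_take_nth x0) ?nth_drop ?subnKC //.
by rewrite size_drop ltn_sub2r // (leq_ltn_trans le_kq).
Qed.

End SeqCount.

Lemma sorted_ltn_last x s : sorted ltn (x :: s) -> x <= last x s.
Proof. by elim: s x => //= y s IH x /andP[lt_xy /IH]; apply/leq_trans/ltnW. Qed.

Lemma ltn_mod_double p m : 0 < m -> (p %% (m + m) < m) = ~~ odd (p %/ m).
Proof.
move=> m_gt0; rewrite addnn -mul2n -{2}(mul1n m) -ltn_divLR // -modn_divl modn2.
by case: odd.
Qed.

Lemma size_blk x y a b : size (blk x y a b) = a + b.
Proof. by rewrite /blk size_cat !size_nseq. Qed.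

Lemma nth_blk x y a b e : e < a + b -> nth 0 (blk x y a b) e = if e < a then x else y.
Proof.
move=> lt_e; rewrite /blk nth_cat size_nseq nth_nseq.
by case: ltnP => // le_ae; rewrite nth_nseq ifT //; lia.
Qed.

Lemma count_blk (P : pred nat) x y a b : count P (blk x y a b) = P x * a + P y * b.
Proof. by rewrite /blk count_cat !count_nseq. Qed.

Lemma count_take_blk (P : pred nat) x y a b z : z <= a + b ->
  count P (take z (blk x y a b)) = P x * minn z a + P y * (z - a).
Proof.
move=> le_z; rewrite /blk take_cat size_nseq /minn; case: ltnP => le_az.
  have -> : z - a = 0 by lia.
  by rewrite take_nseq ?count_nseq ?muln0 ?addn0 // ltnW.
by rewrite take_nseq ?count_cat ?count_nseq // leq_subLR.
Qed.

Definition is_letter (x : nat) := (x == 1) || (x == 2).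

Lemma count_letters s : all is_letter s ->
  count (pred1 1) s + count (pred1 2) s = size s.
Proof. by elim: s => //= x s IH /andP[/orP[]/eqP-> /IH <-]; rewrite /= ?addSn ?addnS. Qed.

Definition altword N n a b :=
  flatten (nseq N (word1 (n * (a + b)) a b ++ word2 (n * (a + b)) a b)).

Definition letter n a b p :=
  if ~~ odd (p %/ (n * (a + b))) == (p %% (a + b) < a) then 1 else 2.

Definition run a b p := (a <= p %% (a + b)) + (p %/ (a + b)).*2.

Definition major m := if odd m then 2 else 1.
Definition minor m := if odd m then 1 else 2.

Lemma major_letter m : is_letter (major m). Proof. by rewrite /major; case: odd. Qed.

Section Altword.
Variables N n a b : nat.
Hypotheses (a_gt0 : 0 < a) (n_gt0 : 0 < n).
Local Notation M := (n * (a + b)).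
Local Notation W := (word1 M a b ++ word2 M a b).
Local Notation u := (altword N n a b).

Let ab_gt0 : 0 < a + b. Proof. exact: ltn_addr. Qed.
Let M_gt0 : 0 < M. Proof. by rewrite muln_gt0 n_gt0. Qed.

Lemma word1E : word1 M a b = flatten (nseq n (blk 1 2 a b)).
Proof. by rewrite /word1 mulnK. Qed.

Lemma word2E : word2 M a b = flatten (nseq n (blk 2 1 a b)).
Proof. by rewrite /word2 mulnK. Qed.

Lemma size_word1 : size (word1 M a b) = M.
Proof. by rewrite word1E size_flatten_nseq size_blk. Qed.

Lemma size_word2 : size (word2 M a b) = M.
Proof. by rewrite word2E size_flatten_nseq size_blk. Qed.

Lemma size_altword : size u = N * (M + M).
Proof. by rewrite size_flatten_nseq size_cat size_word1 size_word2. Qed.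

Lemma nth_word1 e : e < M -> nth 0 (word1 M a b) e = if e %% (a + b) < a then 1 else 2.
Proof.
by move=> lt_eM; rewrite word1E nth_flatten_nseq size_blk // nth_blk // ltn_pmod.
Qed.

Lemma nth_word2 e : e < M -> nth 0 (word2 M a b) e = if e %% (a + b) < a then 2 else 1.
Proof.
by move=> lt_eM; rewrite word2E nth_flatten_nseq size_blk // nth_blk // ltn_pmod.
Qed.

Lemma nth_altword p : p < size u -> nth 0 u p = letter n a b p.
Proof.
rewrite size_altword => lt_p.
rewrite nth_flatten_nseq ?size_cat size_word1 size_word2 // nth_cat size_word1.
have dvd_abM : a + b %| M + M by rewrite addnn -muln2 dvdn_mulr // dvdn_mull.
have modE : p %% (M + M) %% (a + b) = p %% (a + b) by rewrite -(modn_dvdm p dvd_abM).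
have lt_w : p %% (M + M) < M + M by rewrite ltn_pmod // addn_gt0 M_gt0.
rewrite /letter -ltn_mod_double //; case: ltnP => [lt_wM | le_Mw].
  by rewrite nth_word1 // modE; case: ltnP.
rewrite nth_word2; last by rewrite ltn_subLR // addnC.
have -> : (p %% (M + M) - M) %% (a + b) = p %% (a + b).
  by rewrite -modE -[in RHS](subnK le_Mw) -modnDmr modnMl addn0.
by case: ltnP.
Qed.

Lemma all_letters_altword : all is_letter u.
Proof.
apply: all_flatten_nseq; rewrite all_cat word1E word2E.
by rewrite !all_flatten_nseq // /blk all_cat !all_nseq /is_letter /= !orbT.
Qed.

Lemma letter_nth_altword p : p < size u -> is_letter (nth 0 u p).
Proof. by move=> lt_p; rewrite nth_altword // /letter /is_letter; case: ifP. Qed.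

Lemma count_take_letters z : z <= size u ->
  count (pred1 1) (take z u) + count (pred1 2) (take z u) = z.
Proof.
move=> le_z; rewrite count_letters ?size_takel //.
by have := all_letters_altword; rewrite -{1}(cat_take_drop z u) all_cat => /andP[].
Qed.

Lemma count_period x : is_letter x -> count (pred1 x) W = M.
Proof.
rewrite count_cat word1E word2E !count_flatten_nseq !count_blk.
by case/orP=> /eqP-> /=; rewrite ?mul1n ?mul0n ?add0n ?addn0 -mulnDr // addnC.
Qed.

Lemma count_take_altword P z : z <= size u ->
  count P (take z u) = z %/ (M + M) * count P W + count P (take (z %% (M + M)) W).
Proof.
rewrite size_altword => le_z.
have size_W : size W = M + M by rewrite size_cat size_word1 size_word2.
by rewrite /altword take_flatten_nseq size_W ?addn_gt0 ?M_gt0 // count_cat count_flatten_nseq.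
Qed.

Lemma altword_balanced x y z : is_letter x -> is_letter y -> z <= size u ->
  count (pred1 x) (take z u) <= count (pred1 y) (take z u) + M.
Proof.
move=> x_letter y_letter le_z; rewrite !count_take_altword // !count_period //.
rewrite -addnA leq_add2l (leq_trans _ (leq_addl _ _)) //.
by rewrite -[leqRHS](count_period x_letter) count_take_le.
Qed.

Lemma count_take_shift x y p p' : is_letter x -> is_letter y -> p < p' < size u ->
  count (pred1 x) (take p.+1 u) + (nth 0 u p' == y) <=
  count (pred1 y) (take p'.+1 u) + (x != y) * M.
Proof.
move=> x_letter y_letter /andP[lt_pp' lt_p'].
rewrite (count_take_nth 0 _ lt_p') addnAC leq_add2r.
apply: leq_trans (leq_add (count_take_mono _ _ lt_pp') (leqnn _)).
have [<-|neq_xy] := eqVneq x y; first by rewrite mul0n addn0.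
by rewrite mul1n altword_balanced // (ltn_trans lt_pp').
Qed.

Lemma take_drop_altword m y : m < N + N -> y <= M ->
  take y (drop (m * M) u) = take y (flatten (nseq n (blk (major m) (minor m) a b))).
Proof.
move=> lt_m le_y.
have size_W : size W = M + M by rewrite size_cat size_word1 size_word2.
have mE : m * M = odd m * M + m./2 * size W.
  by rewrite size_W addnn -doubleMr doubleMl -mulnDl odd_double_half.
have [k Nk] : exists k, N - m./2 = k.+1.
  by exists (N - m./2).-1; rewrite prednK // subn_gt0 ltn_half_double -addnn.
rewrite mE -drop_drop drop_flatten_nseq Nk /= -catA /major /minor.
case: (odd m); rewrite ?mul1n ?mul0n ?drop0.
  by rewrite drop_size_cat ?size_word1 // takel_cat ?size_word2 // word2E.
by rewrite takel_cat ?size_word1 // word1E.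
Qed.

Lemma count_region P m y : m < N + N -> y <= M ->
  count P (take y (drop (m * M) u)) =
  y %/ (a + b) * (P (major m) * a + P (minor m) * b) +
  (P (major m) * minn (y %% (a + b)) a + P (minor m) * (y %% (a + b) - a)).
Proof.
move=> lt_m le_y; rewrite take_drop_altword // take_flatten_nseq ?size_blk //.
by rewrite count_cat count_flatten_nseq count_blk count_take_blk // ltnW ?ltn_pmod.
Qed.

Lemma leq_run p p' : p <= p' -> run a b p <= run a b p'.
Proof.
move=> le_pp'; rewrite /run; have := leq_div2r (a + b) le_pp'.
rewrite leq_eqVlt => /orP[/eqP eq_div | lt_div].
  move: le_pp'; rewrite {1}(divn_eq p (a + b)) {1}(divn_eq p' (a + b)) eq_div.
  rewrite leq_add2l leq_add2r => le_mod.
  by case: (leqP a (p %% (a + b))) => // le_a; rewrite (leq_trans le_a le_mod).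
apply: leq_trans (leq_addl _ _); apply: leq_trans (leq_add (leq_b1 _) (leqnn _)) _.
by rewrite add1n ltn_double.
Qed.

Lemma run_mul_le p : run a b p * (a + b) <= (a + b) + p.*2.
Proof.
rewrite /run mulnDl; apply: leq_add; first by rewrite -[leqRHS]mul1n leq_mul2r leq_b1 orbT.
by rewrite -doubleMl leq_double leq_divM.
Qed.

Lemma run_mul_ge p : p.*2 < run a b p * (a + b) + (a + b).*2.
Proof.
rewrite /run mulnDl -doubleMl -addnA -doubleD -mulSnr.
by apply: leq_trans _ (leq_addl _ _); rewrite ltn_double ltn_ceil.
Qed.

Lemma letter_run p :
  letter n a b p = if ~~ odd ((run a b p)./2 %/ n) == ~~ odd (run a b p) then 1 else 2.
Proof.
by rewrite /letter /run half_bit_double oddD odd_double addbF oddb mulnC divnMA ltnNge.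
Qed.

Lemma run_lt p p' : p <= p' -> letter n a b p != letter n a b p' -> run a b p < run a b p'.
Proof.
move=> le_pp'; rewrite ltn_neqAle leq_run // andbT; apply: contraNneq => eq_run.
by rewrite !letter_run eq_run.
Qed.

End Altword.

Lemma gword_altword r K l n b : 0 < r -> l <= K ->
  n * (r ^ (K - l) + b) = r ^ (K + 1 + l) ->
  gword r K l b = altword (r ^ (K - l)) n (r ^ (K - l)) b.
Proof.
move=> r_gt0 le_lK nE; rewrite /gword /altword /= -nE.
have -> : r ^ (2 * K + 1) = r ^ (K - l) * (n * (r ^ (K - l) + b)).
  by rewrite nE -expnD; congr (r ^ _); lia.
by rewrite mulnK // nE expn_gt0 r_gt0.
Qed.

Lemma expn_region_le r K i j : 0 < r -> i < j -> j <= K ->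
  r ^ (K + 1 + i) * r ^ (K - j) <= r ^ (2 * K).
Proof. by move=> r_gt0 lt_ij le_jK; rewrite -expnD leq_pexp2l //; lia. Qed.

Lemma expn_sq_le r K j : 10 <= r -> 1 <= j -> j <= K ->
  100 * (r ^ (K - j) * r ^ (K - j)) <= r ^ (2 * K).
Proof.
move=> r_ge10 j_ge1 le_jK; have r_gt0 : 0 < r by lia.
apply: (@leq_trans (r ^ 2 * (r ^ (K - j) * r ^ (K - j)))).
  by rewrite leq_mul2r (leq_trans _ (leq_mul r_ge10 r_ge10)) ?orbT.
by rewrite -!expnD leq_pexp2l //; lia.
Qed.

Local Open Scope ring_scope.

Lemma weight_minor_bounds (R : realType) (c w A : R) : 0 < c -> 0 <= w <= c * A ->
  w <= (1 + c) / c * w <= w + A.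
Proof.
move=> c_gt0 /andP[w_ge0 le_w].
have wE : (1 + c) / c * w = w + w / c by field; rewrite gt_eqF.
rewrite wE; apply/andP; split; first by rewrite lerDl divr_ge0 // ltW.
by rewrite lerD2l ler_pdivrMr // mulrC.
Qed.

Section Potential.
Variables (R : realType) (c : R) (N n a b N' n' a' b' : nat).
Hypotheses (a_gt0 : (0 < a)%N) (n_gt0 : (0 < n)%N) (a'_gt0 : (0 < a')%N) (n'_gt0 : (0 < n')%N).
Hypotheses (c_ge0 : 0 <= c) (b'E : b'%:R = c * a'%:R).
Local Notation M := (n * (a + b))%N.
Local Notation M' := (n' * (a' + b'))%N.
Local Notation u := (altword N n a b).
Local Notation v := (altword N' n' a' b').
Local Notation start q := (q %/ M' * M')%N.
Local Notation tau q := (major (q %/ M')).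

Let M'_gt0 : (0 < M')%N. Proof. by rewrite muln_gt0 n'_gt0 addn_gt0 a'_gt0. Qed.
Let onec_ge0 : 0 <= 1 + c. Proof. by rewrite addr_ge0. Qed.

Lemma start_le q : (start q <= q)%N. Proof. exact: leq_divM. Qed.

Lemma lt_start q : (q < start q + M')%N. Proof. by rewrite -mulSnr ltn_ceil. Qed.

Lemma region_lt q : (q < size v)%N -> (q %/ M' < N' + N')%N.
Proof. by rewrite size_altword // => lt_q; rewrite ltn_divLR // mulnDl -mulnDr. Qed.

Lemma nth_tau_or_c_gt0 q : (q < size v)%N -> (nth 0 v q == tau q) || (0 < c).
Proof.
move=> lt_q; have [c0|c_neq0] := eqVneq c 0; last by rewrite lt_def c_neq0 c_ge0 orbT.
have b'0 : b' = 0%N by apply/eqP; rewrite -(eqr_nat R) b'E c0 mul0r.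
move: lt_q; rewrite b'0 => lt_q.
by rewrite nth_altword // /letter addn0 ltn_pmod // /major; case: odd.
Qed.

Definition weight x q : R := if x == tau q then 1 + c else (1 + c) / c.

Definition region_count x q := count (pred1 x) (take (q.+1 - start q) (drop (start q) v)).

Definition vpot x q : R := (start q)%:R + weight x q * (region_count x q)%:R.

Lemma region_countE x q : (q < size v)%N ->
  let y := (q.+1 - start q)%N in let z := (y %% (a' + b'))%N in
  region_count x q =
  (y %/ (a' + b') * ((major (q %/ M') == x) * a' + (minor (q %/ M') == x) * b') +
   ((major (q %/ M') == x) * minn z a' + (minor (q %/ M') == x) * (z - a')))%N.
Proof.
move=> lt_q y z; rewrite /region_count count_region ?region_lt //.
by rewrite leq_subLR lt_start.
Qed.

Lemma start_decomp q : let y := (q.+1 - start q)%N in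
  (q.+1 = start q + (y %/ (a' + b') * (a' + b') + y %% (a' + b')))%N.
Proof. by move=> y; rewrite -divn_eq /y subnKC // (leq_trans (start_le q)). Qed.

Lemma vpot_major q : (q < size v)%N ->
  (q.+1)%:R <= vpot (tau q) q <= (q.+1)%:R + c * a'%:R.
Proof.
move=> lt_q; rewrite /vpot /weight eqxx (region_countE _ lt_q) /=.
have := start_decomp q; rewrite /=.
set m := (q %/ M')%N; set s := (m * M')%N; set y := (q.+1 - s)%N.
set k := (y %/ (a' + b'))%N; set z := (y %% (a' + b'))%N => qE.
have minor_major : (minor m == major m) = false by rewrite /minor /major; case: odd.
have lt_z : z%:R < a'%:R + c * a'%:R :> R.
  by rewrite -b'E -natrD ltr_nat ltn_pmod // addn_gt0 a'_gt0.
clearbody s y k z; rewrite eqxx minor_major /= !mul1n !mul0n !addn0 qE !(natrD, natrM) b'E.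
case: (leqP z a') => [le_za | lt_az].
  have cz : c * z%:R <= c * a'%:R by rewrite ler_wpM2l // ler_nat.
  have cz0 : 0 <= c * z%:R by rewrite mulr_ge0.
  by apply/andP; split; lra.
have le_az : a'%:R <= z%:R :> R by rewrite ler_nat ltnW.
by apply/andP; split; lra.
Qed.

Lemma vpot_minor x q : (q < size v)%N -> is_letter x -> x != tau q -> 0 < c ->
  (q.+1)%:R - a'%:R <= vpot x q <= (q.+1)%:R.
Proof.
move=> lt_q x_letter x_minor c_gt0.
have xE : x = minor (q %/ M').
  by move: x_letter x_minor; rewrite /is_letter /major /minor; case: odd => /orP[]/eqP->.
rewrite /vpot /weight (negbTE x_minor) (region_countE _ lt_q) /= xE eqxx.
have := start_decomp q; rewrite /=.
set m := (q %/ M')%N; set s := (m * M')%N; set y := (q.+1 - s)%N.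
set k := (y %/ (a' + b'))%N; set z := (y %% (a' + b'))%N => qE.
have major_minor : (major m == minor m) = false by rewrite /minor /major; case: odd.
have lt_z : (z < a' + b')%N by rewrite ltn_pmod // addn_gt0 a'_gt0.
clearbody s y k z; rewrite major_minor /= !mul1n !mul0n !add0n qE !(natrD, natrM) b'E.
set w := (z - a')%N.
have wE : (1 + c) / c * (k%:R * (c * a'%:R) + w%:R) =
          (1 + c) * k%:R * a'%:R + (1 + c) / c * w%:R.
  by field; rewrite gt_eqF.
rewrite wE; case: (leqP z a') => [le_za | lt_az].
  have -> : w = 0%N by apply/eqP; rewrite subn_eq0.
  have le_za' : z%:R <= a'%:R :> R by rewrite ler_nat.
  have z_ge0 := ler0n R z.
  by rewrite mulr0n mulr0 addr0; apply/andP; split; lra.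
have wR : w%:R = z%:R - a'%:R :> R by rewrite natrB // ltnW.
have w_le : w%:R <= c * a'%:R :> R by rewrite -b'E ler_nat leq_subLR ltnW.
have /andP[w1 w2] := weight_minor_bounds c_gt0 (introT andP (conj (ler0n _ w) w_le)).
by apply/andP; split; lra.
Qed.

Lemma weight_ge0 x q : 0 <= weight x q.
Proof. by rewrite /weight; case: ifP => // _; rewrite divr_ge0. Qed.

Lemma vpot_le x q : (q < size v)%N -> is_letter x -> vpot x q <= (q.+1)%:R + c * a'%:R.
Proof.
move=> lt_q x_letter; have [->|x_minor] := eqVneq x (tau q).
  by case/andP: (vpot_major lt_q).
have [c0|c_neq0] := eqVneq c 0.
  (* the weight (1 + c) / c of a minority letter is Rocq's junk value 0 when c = 0 *)
  rewrite /vpot /weight (negbTE x_minor) c0 invr0 mulr0 mul0r mul0r !addr0 ler_nat.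
  exact: leq_trans (start_le q) (leqnSn q).
have c_gt0 : 0 < c by rewrite lt_def c_neq0.
case/andP: (vpot_minor lt_q x_letter x_minor c_gt0) => _ /le_trans; apply.
by rewrite lerDl mulr_ge0.
Qed.

Lemma vpot_ge x q : (q < size v)%N -> is_letter x -> (x == tau q) || (0 < c) ->
  (q.+1)%:R - a'%:R <= vpot x q.
Proof.
move=> lt_q x_letter; have [->|x_minor] := eqVneq x (tau q) => /= [_|c_gt0].
  by case/andP: (vpot_major lt_q) => + _; apply: le_trans; rewrite lerBlDr lerDl.
by case/andP: (vpot_minor lt_q x_letter x_minor c_gt0).
Qed.

Lemma region_count_step x q q' : (q < q' < size v)%N -> (q %/ M' = q' %/ M')%N ->
  (region_count x q + (nth 0 v q' == x) <= region_count x q')%N.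
Proof.
case/andP=> lt_qq' lt_q' eq_reg; rewrite /region_count -eq_reg (@count_slice_nth _ 0 _ _ _ q').
  by rewrite leq_add2r count_take_mono // leq_sub2r.
by rewrite lt_q' andbT (leq_trans (start_le q)) // ltnW.
Qed.

Lemma region_count_last x q : (q < size v)%N -> (nth 0 v q == x <= region_count x q)%N.
Proof. by move=> lt_q; rewrite /region_count (count_slice_nth 0) ?leq_addl ?start_le. Qed.

Lemma weight_ge x q : c ^+ 2 + 2 * c <= 1 -> (x == tau q) || (0 < c) ->
  3 + c <= 2 * (x == tau q)%:R + weight x q.
Proof.
move=> c_small; rewrite /weight; case: eqP => /= [_ _ | _ c_gt0]; first lra.
rewrite mulr0n mulr0 add0r ler_pdivlMr //; rewrite expr2 in c_small; lra.
Qed.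

Lemma vpot_step_same q q' : (q < q' < size v)%N -> (q %/ M' = q' %/ M')%N ->
  weight (nth 0 v q') q' - (nth 0 v q != nth 0 v q')%:R * ((1 + c) * a'%:R) <=
  vpot (nth 0 v q') q' - vpot (nth 0 v q) q.
Proof.
move=> /andP[lt_qq' lt_q'] eq_reg; have lt_q := ltn_trans lt_qq' lt_q'.
set x := nth 0 v q'.
have weightE : weight x q = weight x q' by rewrite /weight eq_reg.
have step : vpot x q + weight x q' <= vpot x q'.
  have := region_count_step x (introT andP (conj lt_qq' lt_q')) eq_reg.
  rewrite eqxx addn1 -(ler_nat R) -natr1 => le_cnt.
  rewrite /vpot -weightE eq_reg -addrA lerD2l -[X in _ + X]mulr1 -mulrDr.
  by rewrite ler_wpM2l ?weight_ge0.
have [->|neq] := eqVneq (nth 0 v q) x; first by rewrite /= mulr0n mul0r subr0 lerBrDl.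
have x_letter : is_letter x by apply: letter_nth_altword.
have lo := vpot_ge lt_q x_letter.
rewrite eq_reg in lo; have {lo}lo := lo (nth_tau_or_c_gt0 lt_q').
have hi := vpot_le lt_q (letter_nth_altword a'_gt0 n'_gt0 lt_q).
rewrite /= mulr1n mul1r; lra.
Qed.

Lemma vpot_step_next q q' : (q < size v)%N -> (q' < size v)%N -> (q %/ M' < q' %/ M')%N ->
  weight (nth 0 v q') q' - c * a'%:R <= vpot (nth 0 v q') q' - vpot (nth 0 v q) q.
Proof.
move=> lt_q lt_q' lt_reg; set x := nth 0 v q'.
have hi := vpot_le lt_q (letter_nth_altword a'_gt0 n'_gt0 lt_q).
have le_start : (q.+1 <= start q')%N.
  by apply: leq_trans (lt_start q) _; rewrite -mulSnr leq_mul2r lt_reg orbT.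
have lo : (q.+1)%:R + weight x q' <= vpot x q'.
  have := region_count_last x lt_q'; rewrite eqxx -(ler_nat R) => cnt_ge1.
  rewrite /vpot lerD ?ler_nat // -[leLHS]mulr1 ler_wpM2l ?weight_ge0 //.
lra.
Qed.

Definition upot p q := (2 * count (pred1 (tau q)) (take p.+1 u))%N.

Lemma upot_step p p' q q' : (p < p' < size u)%N ->
  (upot p q + 2 * (nth 0 u p' == tau q') <= upot p' q' + (tau q != tau q') * (2 * M))%N.
Proof.
move=> lt_pp'; rewrite /upot mulnCA -!mulnDr leq_pmul2l //.
exact: count_take_shift (major_letter _) (major_letter _) lt_pp'.
Qed.

Lemma upot_bounds p q : (p < size u)%N -> (p.+1 <= upot p q + M)%N && (upot p q <= p.+1 + M)%N.
Proof.
move=> lt_p; have := count_take_letters a_gt0 lt_p.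
have minor_letter : is_letter (minor (q %/ M')) by rewrite /minor; case: odd.
have le1 := altword_balanced a_gt0 n_gt0 (major_letter (q %/ M')) minor_letter lt_p.
have le2 := altword_balanced a_gt0 n_gt0 minor_letter (major_letter (q %/ M')) lt_p.
move: le1 le2; rewrite /upot /major /minor.
by case: odd => /= le1 le2 sum; apply/andP; split; lia.
Qed.

Definition gpot p : R := (1 + c) * a'%:R * (run a b p)%:R.

Lemma gpot_step p p' : (p <= p' < size u)%N ->
  (nth 0 u p != nth 0 u p')%:R * ((1 + c) * a'%:R) <= gpot p' - gpot p.
Proof.
case/andP=> le_pp' lt_p'; have lt_p := leq_ltn_trans le_pp' lt_p'.
have run_step : ((nth 0 u p != nth 0 u p') + run a b p <= run a b p')%N.
  rewrite !nth_altword //; case: eqP => [_|/eqP neq]; first exact: leq_run.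
  exact: run_lt neq.
rewrite /gpot -mulrBr mulrC; apply: ler_wpM2l; first by rewrite mulr_ge0.
by rewrite lerBrDr -natrD ler_nat.
Qed.

Lemma gpot_diff_le r p1 pn : b%:R = c * a%:R -> (0 < r)%N -> (a' * r <= a)%N ->
  (p1 <= pn)%N -> gpot pn - gpot p1 <= 2 / r%:R * (pn%:R - p1%:R) + 3 * ((1 + c) * a'%:R).
Proof.
move=> bE r_gt0 le_a'r le_p.
have abE : (a + b)%:R = (1 + c) * a%:R :> R by rewrite natrD bE; ring.
have a_neq0 : a%:R != 0 :> R by rewrite pnatr_eq0 -lt0n.
have run_diff : ((run a b pn)%:R - (run a b p1)%:R) * (a + b)%:R <=
                2 * (pn%:R - p1%:R) + 3 * (a + b)%:R :> R.
  have := run_mul_le a b pn; have := run_mul_ge b a_gt0 p1.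
  move: (run a b pn) (run a b p1) => rn r1.
  by rewrite -!muln2 -!(ler_nat R) -!natr1 !(natrD, natrM) => ge le; lra.
have ratio : a'%:R / a%:R <= 1 / r%:R :> R.
  by rewrite div1r ler_pdivrMr ?ltr0n // mulrC ler_pdivlMr ?ltr0n // -natrM ler_nat.
have D_ge0 : 0 <= pn%:R - p1%:R :> R by rewrite subr_ge0 ler_nat.
have gE : gpot pn - gpot p1 =
          a'%:R / a%:R * (((run a b pn)%:R - (run a b p1)%:R) * (a + b)%:R).
  by rewrite /gpot abE; field.
have e3 : a'%:R / a%:R * (3 * (a + b)%:R) = 3 * ((1 + c) * a'%:R) by rewrite abE; field.
have e2 := ler_wpM2r D_ge0 ratio.
rewrite gE; apply: le_trans (ler_wpM2l (divr_ge0 (ler0n _ _) (ler0n _ _)) run_diff) _.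
rewrite mulrDr e3 lerD2r; lra.
Qed.

Let zweight_ge0 : 0 <= 2 * M%:R + c * a'%:R. Proof. by rewrite addr_ge0 ?mulr_ge0. Qed.

Definition zpot q : R := (2 * M%:R + c * a'%:R) * (q %/ M')%:R.

Lemma zpot_step q q' : (q %/ M' < q' %/ M')%N -> 2 * M%:R + c * a'%:R <= zpot q' - zpot q.
Proof.
move=> lt_reg; rewrite /zpot -mulrBr -[leLHS]mulr1 ler_wpM2l //.
by rewrite lerBrDr -(natrD R 1) ler_nat add1n.
Qed.

Lemma zpot_bounds q : (q < size v)%N -> 0 <= zpot q <= (2 * M%:R + c * a'%:R) * (N' + N')%:R.
Proof.
move=> lt_q; rewrite /zpot mulr_ge0 //= ler_wpM2l // ler_nat ltnW //.
exact: region_lt.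
Qed.

Definition potential p q : R := (upot p q)%:R + gpot p + vpot (nth 0 v q) q + zpot q.

Lemma potential_step p p' q q' : c ^+ 2 + 2 * c <= 1 ->
  (p < p' < size u)%N -> (q < q' < size v)%N ->
  nth 0 u p = nth 0 v q -> nth 0 u p' = nth 0 v q' ->
  3 + c <= potential p' q' - potential p q.
Proof.
move=> c_small lt_p lt_q eq_pq eq_pq'.
case/andP: (lt_p) => lt_pp' lt_p'; case/andP: (lt_q) => lt_qq' lt_q'.
have U := upot_step q q' lt_p.
have G := gpot_step (introT andP (conj (ltnW lt_pp') lt_p')).
have W := weight_ge c_small (nth_tau_or_c_gt0 lt_q').
have G0 : 0 <= gpot p' - gpot p by apply: le_trans _ G; rewrite !mulr_ge0.
rewrite /potential; rewrite eq_pq eq_pq' in U G; set x := nth 0 v q' in U G W *.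
have := leq_div2r M' (ltnW lt_qq'); rewrite leq_eqVlt => /orP[/eqP eq_reg | lt_reg].
  have V := vpot_step_same lt_q eq_reg.
  move: U; rewrite /zpot eq_reg eqxx mul0n addn0 -(ler_nat R) natrD natrM => U.
  rewrite -/x in V; lra.
have V := vpot_step_next (ltn_trans lt_qq' lt_q') lt_q' lt_reg.
have Z := zpot_step lt_reg.
move: U; rewrite -(ler_nat R) !natrD !natrM => U.
have : (tau q != tau q')%:R * (2 * M%:R) <= 2 * M%:R :> R.
  by rewrite -[leRHS]mul1r; apply: ler_wpM2r; rewrite ?mulr_ge0 // lern1 leq_b1.
rewrite -/x in V; lra.
Qed.

Lemma potential_chain I J p q : c ^+ 2 + 2 * c <= 1 ->
  sorted ltn (p :: I) -> sorted ltn (q :: J) -> size I = size J ->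
  all (fun k => k < size u)%N (p :: I) -> all (fun k => k < size v)%N (q :: J) ->
  map (nth 0 u) (p :: I) = map (nth 0 v) (q :: J) ->
  (3 + c) * (size I)%:R <= potential (last p I) (last q J) - potential p q.
Proof.
move=> c_small; elim: I J p q => [|p' I IH] [|q' J] p q //=.
  by move=> *; rewrite subrr mulr0.
move=> /andP[lt_pp' sI] /andP[lt_qq' sJ] [eq_size] /andP[lt_p /andP[lt_p' aI]]
  /andP[lt_q /andP[lt_q' aJ]] [eq_pq eq_pq' eq_map].
have step := potential_step c_small (introT andP (conj lt_pp' lt_p'))
  (introT andP (conj lt_qq' lt_q')) eq_pq eq_pq'.
have := IH J p' q' sI sJ eq_size.
rewrite /= lt_p' lt_q' aI aJ eq_pq' eq_map => /(_ isT isT erefl).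
by rewrite -natr1; lra.
Qed.

Lemma potential_diff_le r p1 pn q1 qn : b%:R = c * a%:R -> (0 < r)%N -> (a' * r <= a)%N ->
  (p1 <= pn < size u)%N -> (q1 <= qn < size v)%N ->
  potential pn qn - potential p1 q1 <=
  (1 + 2 / r%:R) * (pn%:R - p1%:R) + (qn%:R - q1%:R) +
  ((2 * M%:R + c * a'%:R) * (2 * N' + 1)%:R + 4 * ((1 + c) * a'%:R)).
Proof.
move=> bE r_gt0 le_a'r /andP[le_p lt_pn] /andP[le_q lt_qn].
have lt_p1 := leq_ltn_trans le_p lt_pn; have lt_q1 := leq_ltn_trans le_q lt_qn.
have /andP[_ Un] := upot_bounds qn lt_pn; have /andP[U1 _] := upot_bounds q1 lt_p1.
move: Un U1; rewrite -!(ler_nat R) !(natrD _ _ M) -!natr1 => Un U1.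
have G := gpot_diff_le bE r_gt0 le_a'r le_p.
have Vn := vpot_le lt_qn (letter_nth_altword a'_gt0 n'_gt0 lt_qn).
have V1 := vpot_ge lt_q1 (letter_nth_altword a'_gt0 n'_gt0 lt_q1) (nth_tau_or_c_gt0 lt_q1).
have /andP[_ Zn] := zpot_bounds lt_qn; have /andP[Z1 _] := zpot_bounds lt_q1.
move: Zn; rewrite (natrD _ N' N') => Zn.
have ca'_ge0 : 0 <= c * a'%:R by rewrite mulr_ge0.
rewrite -!natr1 in Vn V1.
rewrite (natrD _ (2 * N') 1) (natrM _ 2 N') /potential; lra.
Qed.

Theorem altword_common_subseq_bound r I J : c ^+ 2 + 2 * c <= 1 -> b%:R = c * a%:R ->
  (0 < r)%N -> (a' * r <= a)%N -> common_subseq u v I J ->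
  (3 + c) * (size I)%:R <=
  (1 + 2 / r%:R) * (wspan I)%:R + (wspan J)%:R +
  ((2 * M%:R + c * a'%:R) * (2 * N' + 1)%:R + 4 * ((1 + c) * a'%:R) + (1 + c)).
Proof.
move=> c_small bE r_gt0 le_a'r [sI sJ eq_size [aI aJ eq_map]].
have E_ge0 : 0 <= (2 * M%:R + c * a'%:R) * (2 * N' + 1)%:R + 4 * ((1 + c) * a'%:R) + (1 + c).
  by rewrite !addr_ge0 ?mulr_ge0.
case: I J sI sJ eq_size aI aJ eq_map => [|p1 I] [|q1 J] // sI sJ.
  by move=> *; rewrite /= !mulr0 !add0r.
case=> eq_size aI aJ eq_map.
have chain := potential_chain c_small sI sJ eq_size aI aJ eq_map.
have [lt_p1 lt_pn] : (p1 < size u)%N /\ (last p1 I < size u)%N.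
  by split; apply: (allP aI); rewrite ?mem_head ?mem_last.
have [lt_q1 lt_qn] : (q1 < size v)%N /\ (last q1 J < size v)%N.
  by split; apply: (allP aJ); rewrite ?mem_head ?mem_last.
have le_p := sorted_ltn_last sI; have le_q := sorted_ltn_last sJ.
have diff := potential_diff_le bE r_gt0 le_a'r
  (introT andP (conj le_p lt_pn)) (introT andP (conj le_q lt_qn)).
have r_inv : 0 <= 2 / r%:R :> R by rewrite divr_ge0.
rewrite -!natr1 !natrB //; lra.
Qed.

End Potential.

Lemma sqr_add_double_le1 (R : realType) (c : R) : 0 <= c -> c < Num.sqrt 2 - 1 ->
  c ^+ 2 + 2 * c <= 1.
Proof.
move=> c_ge0 c_lt.
have s2 : Num.sqrt (2 : R) * Num.sqrt 2 = 2 by rewrite -expr2 sqr_sqrtr.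
rewrite expr2; nra.
Qed.

Lemma block_length (R : realType) (c : R) r t K l b : r%:R = (1 + c) * t%:R ->
  c * (r ^ (K - l))%:R = b%:R -> (l <= K)%N ->
  (t * r ^ (2 * l) * (r ^ (K - l) + b) = r ^ (K + 1 + l))%N.
Proof.
move=> rE bE le_lK; apply/eqP; rewrite -(eqr_nat R).
have -> : (r ^ (K + 1 + l) = r * r ^ (K - l) * r ^ (2 * l))%N.
  by rewrite -expnS -expnD; congr (expn r _); lia.
by rewrite !natrM natrD -bE rE; apply/eqP; ring.
Qed.

Lemma error_term_le (R : realType) (c : R) M a' X : 0 <= c -> c <= 1 / 2 -> (0 < a')%N ->
  (M * a' <= X)%N -> (100 * (a' * a') <= X)%N ->
  (2 * M%:R + c * a'%:R) * (2 * a' + 1)%:R + 4 * ((1 + c) * a'%:R) + (1 + c) <= 10 * X%:R.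
Proof.
move=> c_ge0 c_le a'_gt0 le_Ma' le_a'a'.
have le_M : (M <= X)%N by apply: leq_trans le_Ma'; rewrite leq_pmulr.
have le_a' : (a' <= a' * a')%N by rewrite leq_pmulr.
have a'a'_ge1 : (1 <= a' * a')%N by rewrite muln_gt0 a'_gt0.
move: le_M le_Ma' le_a'a' le_a' a'a'_ge1; rewrite -!(ler_nat R) !natrM.
move=> {}le_M {}le_Ma' {}le_a'a' {}le_a' {}a'a'_ge1.
have ca'a' : c * (a'%:R * a'%:R) <= 1 / 2 * (a'%:R * a'%:R).
  by apply: ler_wpM2r; rewrite ?mulr_ge0.
have ca' : c * a'%:R <= 1 / 2 * a'%:R by apply: ler_wpM2r.
rewrite natrD natrM; lra.
Qed.

Theorem lemma3p8 (Rt : realType) (c : Rt) (K t r i j bi bj : nat) (I J : seq nat) :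
  0 <= c -> c < Num.sqrt 2 - 1 ->
  (1 <= K)%N -> (0 < t)%N ->
  r%:R = (1 + c) * t%:R -> (10 <= r)%N ->
  (1 <= i)%N -> (i < j)%N -> (j <= K)%N ->
  c * (r ^ (K - i))%:R = bi%:R ->
  c * (r ^ (K - j))%:R = bj%:R ->
  common_subseq (gword r K i bi) (gword r K j bj) I J ->
  (1 + 2 / r%:R) * (wspan I)%:R + (wspan J)%:R
    >= (3 + c) * (size I)%:R - 10 * (r ^ (2 * K + 1))%:R / r%:R.
Proof.
move=> c_ge0 c_lt _ t_gt0 rE r_ge10 i_ge1 lt_ij le_jK biE bjE.
have r_gt0 : (0 < r)%N by apply: leq_trans r_ge10.
have le_iK : (i <= K)%N by apply/ltnW/(leq_trans lt_ij).
have pos l : (0 < r ^ l)%N by rewrite expn_gt0 r_gt0.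
have npos l : (0 < t * r ^ (2 * l))%N by rewrite muln_gt0 t_gt0 pos.
have blk_i := block_length rE biE le_iK; have blk_j := block_length rE bjE le_jK.
have le_a'r : (r ^ (K - j) * r <= r ^ (K - i))%N by rewrite -expnSr leq_pexp2l //; lia.
have c_small := sqr_add_double_le1 c_ge0 c_lt.
rewrite (gword_altword r_gt0 le_iK blk_i) (gword_altword r_gt0 le_jK blk_j).
move/(altword_common_subseq_bound (pos _) (npos _) (pos _) (npos _) c_ge0 (esym bjE)
  c_small (esym biE) r_gt0 le_a'r).
rewrite lerBlDr blk_i => /le_trans; apply; rewrite lerD2l.
have -> : 10 * (r ^ (2 * K + 1))%:R / r%:R = 10 * (r ^ (2 * K))%:R :> Rt.
  by rewrite addn1 expnS natrM; field; rewrite pnatr_eq0 -lt0n.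
apply: error_term_le => //; first by nra.
  exact: expn_region_le r_gt0 lt_ij le_jK.
exact: expn_sq_le r_ge10 (leq_trans i_ge1 (ltnW lt_ij)) le_jK.
Qed.
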